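(* Let $\alpha=(\alpha_1,\ldots,\alpha_n)$ be a composition, and suppose there is $1\le r\le n-1$ with $\alpha_r<\alpha_{r+1}$. Let $w\in S_n$ be a permutation in which the value $r$ appears before the value $r+1$. Let $\alpha'=\alpha\cdot s_r$ (i.e. $\alpha$ with $\alpha_r$ and $\alpha_{r+1}$ interchanged). Then $x_\alpha(w)=x_{\alpha'}(w)$.
   Context: A composition is a sequence of $n$ nonnegative integers. The skyline diagram $D(\gamma)$ of a composition $\gamma$ is the set of boxes $(i,j)$ (row $i$, column $j$, rows numbered top to bottom) with $1\le j\le\gamma_i$. For $w=w_1\cdots w_n\in S_n$, the filling $\mathcal{F}_w(D(\gamma))$ is defined column by column: for each column $j$, for $k=1,\ldots,n$ in turn, place $w_k$ into the topmost still-empty box of column $j$ of $D(\gamma)$ whose row index is $\ge w_k$, skipping $w_k$ if no such box exists. Then $x_\gamma(w)=(x_1,\ldots,x_n)$, where $x_k$ is the number of appearances of $k$ in $\mathcal{F}_w(D(\gamma))$. *)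

From mathcomp Require Import all_boot all_fingroup.
Set Implicit Arguments. Unset Strict Implicit. Unset Printing Implicit Defensive.

(* Conventions: a composition gamma = (gamma_1,...,gamma_n) is a seq nat of
   size n, with gamma_i = nth 0 gamma (i-1).  Rows and values are numbered
   1..n (1-based, as in the paper).  A permutation w : 'S_n is read in
   one-line notation w_1 ... w_n with w_k = (w (k-1)).+1. *)

Definition word n (w : 'S_n) : seq nat := [seq (w i).+1 | i <- enum 'I_n].

(* Filling of one column.  [avail] = rows of the column still empty, listed
   top to bottom (increasing). *)
Fixpoint fill_col (avail : seq nat) (vals : seq nat) : seq nat :=
  match vals with
  | [::] => [::]
  | v :: vs =>
      match [seq r <- avail | v <= r] with
      | [::] => fill_col avail vs
      | r :: _ => v :: fill_col (rem r avail) vs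
      end
  end.

Definition col_rows (gamma : seq nat) (j : nat) : seq nat :=
  [seq i <- iota 1 (size gamma) | j <= nth 0 gamma i.-1].

(* all entries of F_w(D(gamma)) (columns 1 .. max gamma), as a multiset *)
Definition filling (gamma : seq nat) (wd : seq nat) : seq nat :=
  flatten [seq fill_col (col_rows gamma j) wd
          | j <- iota 1 (foldr maxn 0 gamma)].

Definition xvec (gamma : seq nat) (wd : seq nat) : seq nat :=
  [seq count_mem k (filling gamma wd) | k <- iota 1 (size gamma)].

Definition swap_adj (alpha : seq nat) (r : nat) : seq nat :=
  [seq nth 0 alpha (if i == r.-1 then r else if i == r then r.-1 else i)
  | i <- iota 0 (size alpha)].

From mathcomp Require Import all_boot all_fingroup zify.

(* Swapping alpha_r and alpha_(r+1) changes only the columns j with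
   alpha_r < j <= alpha_(r+1): there D(alpha) has its box in row r+1 and
   D(alpha s_r) has it in row r, all other rows being the same.  The two rows
   are indistinguishable to every value except r+1, which comes after r in w;
   the value r lands in whichever of the two boxes is present, and from then
   on the two columns have the same empty boxes. *)

Lemma rem_cat (T : eqType) (x : T) s1 s2 :
  rem x (s1 ++ s2) = if x \in s1 then rem x s1 ++ s2 else s1 ++ rem x s2.
Proof.
elim: s1 => [|y s1 IH] //=; rewrite inE IH eq_sym.
by case: eqVneq => //= _; case: (x \in s1).
Qed.

Lemma fill_col_raise_row r vals L R :
  all (fun x => x < r) L -> all (fun x => r.+1 < x) R ->
  index r vals < index r.+1 vals ->
  fill_col (L ++ r :: R) vals = fill_col (L ++ r.+1 :: R) vals.
Proof.
elim: vals L R => [|v vals IH] L R // ltL gtR.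
have notinL x : r <= x -> (x \in L) = false.
  by move=> le_rx; apply/negP => /(allP ltL); rewrite ltnNge le_rx.
rewrite /= !filter_cat /=.
case: (eqVneq v r.+1) => [_|ne_vr1 hidx]; first by rewrite ltn0.
have -> : (v <= r.+1) = (v <= r) by rewrite leq_eqVlt (negbTE ne_vr1).
case: (eqVneq v r) => [eq_vr|ne_vr].
  have emptyL : [seq x <- L | v <= x] = [::].
    rewrite -(filter_pred0 L); apply: eq_in_filter => x /(allP ltL) lt_xr.
    by rewrite /= eq_vr leqNgt lt_xr.
  by rewrite emptyL eq_vr leqnn /= !rem_cat !notinL //= !eqxx.
rewrite (negbTE ne_vr) ltnS in hidx.
case EL: [seq x <- L | v <= x] => [|x s] /=; last first.
  have /[!mem_filter]/andP[_ xL] : x \in [seq x <- L | v <= x] by rewrite EL mem_head.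
  rewrite !rem_cat xL; congr cons; apply: IH => //.
  by apply/allP => y /mem_rem /(allP ltL).
case: (leqP v r) => [le_vr|lt_rv] /=.
  by rewrite !rem_cat !notinL //= !eqxx.
case ER: [seq x <- R | v <= x] => [|y t] /=; first exact: IH.
have /[!mem_filter]/andP[_ yR] : y \in [seq x <- R | v <= x] by rewrite ER mem_head.
have lt_ry : r.+1 < y := allP gtR y yR.
rewrite !rem_cat (notinL y) /= ?ltn_eqF ?(ltnW lt_ry) ?(ltnW (ltnW lt_ry)) //.
congr cons; apply: IH => //.
by apply/allP => z /mem_rem /(allP gtR).
Qed.

Definition swap_idx (r i : nat) : nat :=
  if i == r.-1 then r else if i == r then r.-1 else i.

Lemma swap_idxK r : involutive (swap_idx r).
Proof. by move=> i; rewrite /swap_idx; do 5?[case: eqP => /=]; lia. Qed.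

Lemma swap_idx_lt r n i : r < n -> (swap_idx r i < n) = (i < n).
Proof. by rewrite /swap_idx => lt_rn; do 2?[case: eqP => /=]; lia. Qed.

Lemma swap_idx_id r i : i != r.-1 -> i != r -> swap_idx r i = i.
Proof. by rewrite /swap_idx => /negbTE-> /negbTE->. Qed.

Lemma swap_idx_l r : swap_idx r r.-1 = r.
Proof. by rewrite /swap_idx eqxx. Qed.

Lemma swap_idx_r r : swap_idx r r = r.-1.
Proof. by rewrite /swap_idx eqxx; case: eqP. Qed.

Lemma size_swap_adj alpha r : size (swap_adj alpha r) = size alpha.
Proof. by rewrite size_map size_iota. Qed.

Lemma nth_swap_adj alpha r i : r < size alpha ->
  nth 0 (swap_adj alpha r) i = nth 0 alpha (swap_idx r i).
Proof.
move=> lt_r; case: (ltnP i (size alpha)) => lt_i.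
  by rewrite (nth_map 0) ?size_iota // nth_iota.
by rewrite !nth_default ?size_swap_adj // leqNgt swap_idx_lt // -leqNgt.
Qed.

Lemma perm_swap_adj alpha r : r < size alpha -> perm_eq (swap_adj alpha r) alpha.
Proof.
move=> lt_r; have swap_inj := inv_inj (swap_idxK r).
have perm_idx : perm_eq (map (swap_idx r) (iota 0 (size alpha))) (iota 0 (size alpha)).
  apply: uniq_perm; rewrite ?map_inj_uniq ?iota_uniq // => i.
  by rewrite -{1}(swap_idxK r i) mem_map // !mem_iota !add0n swap_idx_lt.
rewrite /swap_adj -[X in perm_eq _ X](mkseq_nth 0) /mkseq.
by rewrite (map_comp (nth 0 alpha) (swap_idx r)) perm_map.
Qed.

Lemma col_rows_split gamma j r : 0 < r < size gamma ->
  col_rows gamma j =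
    [seq i <- iota 1 r.-1 | j <= nth 0 gamma i.-1]
    ++ [seq i <- [:: r; r.+1] | j <= nth 0 gamma i.-1]
    ++ [seq i <- iota r.+2 (size gamma - r.+1) | j <= nth 0 gamma i.-1].
Proof.
move=> /andP[gt0_r lt_r]; rewrite /col_rows -!filter_cat.
rewrite {1}(_ : size gamma = r.-1 + (2 + (size gamma - r.+1))) ?iotaD; last by lia.
by rewrite (_ : 1 + r.-1 = r) 1?addn2 //; lia.
Qed.

Lemma fill_col_swap_adj alpha r j vals :
  0 < r < size alpha -> nth 0 alpha r.-1 < nth 0 alpha r ->
  index r vals < index r.+1 vals ->
  fill_col (col_rows alpha j) vals = fill_col (col_rows (swap_adj alpha r) j) vals.
Proof.
move=> r_bounds lt_alpha hidx; have /andP[gt0_r lt_r] := r_bounds.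
have r_bounds' : 0 < r < size (swap_adj alpha r) by rewrite size_swap_adj.
rewrite (col_rows_split _ j _ r_bounds) (col_rows_split _ j _ r_bounds') size_swap_adj.
set L := filter _ (iota 1 r.-1); set R := filter _ (iota r.+2 _).
have -> : [seq i <- iota 1 r.-1 | j <= nth 0 (swap_adj alpha r) i.-1] = L.
  apply: eq_in_filter => i; rewrite mem_iota => /andP[ge1_i lt_i].
  by rewrite nth_swap_adj // swap_idx_id //; lia.
have -> : [seq i <- iota r.+2 (size alpha - r.+1)
            | j <= nth 0 (swap_adj alpha r) i.-1] = R.
  apply: eq_in_filter => i; rewrite mem_iota => /andP[ge_i lt_i].
  by rewrite nth_swap_adj // swap_idx_id //; lia.
rewrite /= !nth_swap_adj // swap_idx_l swap_idx_r.
case: (leqP j (nth 0 alpha r.-1)) => [le1|lt1];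
  case: (leqP j (nth 0 alpha r)) => [le2|lt2] //=; first lia.
symmetry; apply: fill_col_raise_row => //; apply/allP => i.
  by rewrite mem_filter mem_iota; lia.
by rewrite mem_filter mem_iota; lia.
Qed.

Theorem proposition4p5 (alpha : seq nat) (w : 'S_(size alpha)) (r : nat) :
  1 <= r <= (size alpha).-1 ->
  nth 0 alpha r.-1 < nth 0 alpha r ->
  index r (word w) < index r.+1 (word w) ->
  xvec alpha (word w) = xvec (swap_adj alpha r) (word w).
Proof.
move=> r_bounds lt_alpha hidx.
have {}r_bounds : 0 < r < size alpha by lia.
have lt_r : r < size alpha by case/andP: r_bounds.
have same_width : foldr maxn 0 (swap_adj alpha r) = foldr maxn 0 alpha.
  by rewrite !foldrE (perm_big _ (perm_swap_adj _ _ lt_r)).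
rewrite /xvec /filling size_swap_adj same_width.
apply: eq_map => k; congr (count_mem k (flatten _)).
by apply: eq_map => j; apply: fill_col_swap_adj.
Qed.
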